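(* Let $(A,\star)$ be a pre-Lie algebra and define $x\circ y=x\star y+2y\star x$ for $x,y\in A$. Then $(A,\circ)$ is an anti-pre-Lie algebra if and only if $(A,\star)$ is a Novikov algebra. Moreover, in this case $(A,\circ)$ is an admissible Novikov algebra.
   Context: All vector spaces are finite-dimensional over a field $\mathbb F$ of characteristic $0$. A pre-Lie algebra is $(A,\star)$ with $(x\star y)\star z-x\star(y\star z)=(y\star x)\star z-y\star(x\star z)$ for all $x,y,z$; a Novikov algebra is a pre-Lie algebra with additionally $(x\star y)\star z=(x\star z)\star y$. For a bilinear operation $\circ$ write $[x,y]=x\circ y-y\circ x$. An anti-pre-Lie algebra is $(A,\circ)$ such that for all $x,y,z$: (i) $x\circ(y\circ z)-y\circ(x\circ z)=[y,x]\circ z$, and (ii) $[x,y]\circ z+[y,z]\circ x+[z,x]\circ y=0$. An admissible Novikov algebra is $(A,\circ)$ satisfying (i) and $2x\circ[y,z]=(x\circ y)\circ z-(x\circ z)\circ y$. *)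

From HB Require Import structures.
From mathcomp Require Import all_boot all_order all_algebra.
Set Implicit Arguments. Unset Strict Implicit. Unset Printing Implicit Defensive.
Import GRing.Theory.
Local Open Scope ring_scope.

Section Algs.
Variables (F : fieldType) (A : lmodType F).

Definition bilinear_op (m : A -> A -> A) : Prop :=
  (forall a x y z, m (a *: x + y) z = a *: m x z + m y z) /\
  (forall a x y z, m x (a *: y + z) = a *: m x y + m x z).

Definition comm_op (m : A -> A -> A) (x y : A) : A := m x y - m y x.

Definition is_preLie (m : A -> A -> A) : Prop :=
  forall x y z, m (m x y) z - m x (m y z) = m (m y x) z - m y (m x z).

Definition is_Novikov (m : A -> A -> A) : Prop :=
  is_preLie m /\ forall x y z, m (m x y) z = m (m x z) y.

Definition is_antipreLie (m : A -> A -> A) : Prop :=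
  (forall x y z, m x (m y z) - m y (m x z) = m (comm_op m y x) z) /\
  (forall x y z, m (comm_op m x y) z + m (comm_op m y z) x + m (comm_op m z x) y = 0).

Definition is_admissible_Novikov (m : A -> A -> A) : Prop :=
  (forall x y z, m x (m y z) - m y (m x z) = m (comm_op m y x) z) /\
  (forall x y z, 2%:R *: m x (comm_op m y z) = m (m x y) z - m (m x z) y).

End Algs.

From HB Require Import structures.
From mathcomp Require Import all_boot all_order all_algebra.
From mathcomp Require Import ring.
Set Implicit Arguments. Unset Strict Implicit.
Import GRing.Theory.
Local Open Scope ring_scope.

(* Write [x o y = x * y + 2 y * x].  Expanding by bilinearity and using the
   pre-Lie identity, the defect of the first anti-pre-Lie identity for [o] is
   [6 ((z * y) * x - (z * x) * y)], so in characteristic 0 it vanishes exactly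
   when [*] is right-commutative, i.e. Novikov.  Once [*] is Novikov, the
   pre-Lie and right-commutativity relations reduce every cubic monomial in
   [x, y, z] to a common set of six, and both the cyclic identity and the
   admissible Novikov identity for [o] become coefficient comparisons. *)

Section LinearCombination.
Variables (R : comNzRingType) (V : lmodType R) (v : seq V).

Definition lincomb (p : {poly R}) : V := \sum_(i < size v) p`_i *: v`_i.

Lemma lincombD p q : lincomb (p + q) = lincomb p + lincomb q.
Proof.
by rewrite /lincomb -big_split; apply: eq_bigr => i _; rewrite coefD scalerDl.
Qed.

Lemma lincombN p : lincomb (- p) = - lincomb p.
Proof.
by rewrite /lincomb -sumrN; apply: eq_bigr => i _; rewrite coefN scaleNr.
Qed.

Lemma lincombZ c p : lincomb (c%:P * p) = c *: lincomb p.
Proof.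
by rewrite /lincomb scaler_sumr; apply: eq_bigr => i _; rewrite coefCM scalerA.
Qed.

Lemma lincomb0 : lincomb 0 = 0.
Proof. by rewrite /lincomb big1 // => i _; rewrite coef0 scale0r. Qed.

Lemma lincombXn i : (i < size v)%N -> lincomb 'X^i = v`_i.
Proof.
move=> lt_i_v; rewrite /lincomb (bigD1 (Ordinal lt_i_v)) //= coefXn eqxx scale1r.
rewrite big1 ?addr0 // => j neq_ji; rewrite coefXn.
have /negbTE -> : (j : nat) != i by rewrite -(inj_eq val_inj) in neq_ji.
by rewrite scale0r.
Qed.

End LinearCombination.

(* Proves an identity between R-linear combinations of the vectors listed in
   [atoms] by coding the i-th vector as ['X^i], so that [ring] on [{poly R}]
   compares coefficients. *)
Ltac lincomb_ring atoms :=
  let v := fresh "v" in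
  pose v := atoms;
  let rec code l i :=
    let l := eval hnf in l in
    lazymatch l with
    | nil => idtac
    | cons ?a ?l' =>
        let e := fresh in
        have e : a = lincomb v 'X^i := esym (lincombXn (v := v) (i := i) isT);
        rewrite ?e; clear e; code l' (S i)
    end in
  code atoms 0%N;
  rewrite -?(lincombZ, lincombN, lincombD) -?(lincomb0 v);
  apply: (congr1 (lincomb v)); ring.

Section CircProduct.
Variables (F : fieldType) (A : lmodType F) (s : A -> A -> A).
Hypothesis s_bilinear : bilinear_op s.

Lemma bilinDl x y z : s (x + y) z = s x z + s y z.
Proof. by have := s_bilinear.1 1 x y z; rewrite !scale1r. Qed.

Lemma bilinDr x y z : s x (y + z) = s x y + s x z.
Proof. by have := s_bilinear.2 1 x y z; rewrite !scale1r. Qed.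

Lemma bilin0l z : s 0 z = 0.
Proof. by apply: (@addrI _ (s 0 z)); rewrite addr0 -bilinDl addr0. Qed.

Lemma bilin0r z : s z 0 = 0.
Proof. by apply: (@addrI _ (s z 0)); rewrite addr0 -bilinDr addr0. Qed.

Lemma bilinZl a x z : s (a *: x) z = a *: s x z.
Proof. by have := s_bilinear.1 a x 0 z; rewrite !addr0 bilin0l addr0. Qed.

Lemma bilinZr a x z : s x (a *: z) = a *: s x z.
Proof. by have := s_bilinear.2 a x z 0; rewrite !addr0 bilin0r addr0. Qed.

Lemma bilinNl x z : s (- x) z = - s x z.
Proof. by rewrite -scaleN1r bilinZl scaleN1r. Qed.

Lemma bilinNr x z : s z (- x) = - s z x.
Proof. by rewrite -scaleN1r bilinZr scaleN1r. Qed.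

Definition bilinE := (bilinDl, bilinDr, bilinZl, bilinZr, bilinNl, bilinNr).

Definition cubic_monomials (x y z : A) : seq A :=
  [:: s (s x y) z; s (s x z) y; s (s y x) z; s (s y z) x;
      s (s z x) y; s (s z y) x; s x (s y z); s x (s z y);
      s y (s x z); s y (s z x); s z (s x y); s z (s y x)].

Hypothesis s_preLie : is_preLie s.

Lemma preLie_swap u v w : s u (s v w) = s v (s u w) + s (s u v) w - s (s v u) w.
Proof.
rewrite -[s (s u v) w](subrK (s u (s v w))) s_preLie.
lincomb_ring (cubic_monomials u v w).
Qed.

Definition circ (x y : A) : A := s x y + 2%:R *: s y x.

Lemma circ_left_defect x y z :
  circ x (circ y z) - circ y (circ x z) - circ (comm_op circ y x) z =
  6%:R *: (s (s z y) x - s (s z x) y).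
Proof.
rewrite /circ /comm_op !bilinE.
rewrite (preLie_swap x y z) (preLie_swap z x y) (preLie_swap z y x).
lincomb_ring (cubic_monomials x y z).
Qed.

Lemma circ_left_identity_iff : (6%:R : F) != 0 ->
  (forall x y z, circ x (circ y z) - circ y (circ x z) = circ (comm_op circ y x) z)
  <-> right_commutative s.
Proof.
move=> six_neq0; split=> [circ_left x y z | s_rc x y z].
- have := circ_left_defect z y x; rewrite circ_left subrr => /esym/eqP.
  by rewrite scaler_eq0 (negbTE six_neq0) subr_eq0 => /eqP.
- by apply/eqP; rewrite -subr_eq0 circ_left_defect s_rc subrr scaler0.
Qed.

Hypothesis s_right_comm : right_commutative s.

Lemma Novikov_circ_cyclic x y z :
  circ (comm_op circ x y) z + circ (comm_op circ y z) x + circ (comm_op circ z x) y = 0.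
Proof.
rewrite /circ /comm_op !bilinE.
rewrite (preLie_swap x y z) (preLie_swap z x y) (preLie_swap z y x).
rewrite (s_right_comm x z y) (s_right_comm y z x) (s_right_comm z y x).
lincomb_ring (cubic_monomials x y z).
Qed.

Lemma Novikov_circ_admissible x y z :
  2%:R *: circ x (comm_op circ y z) = circ (circ x y) z - circ (circ x z) y.
Proof.
rewrite /circ /comm_op !bilinE.
rewrite (preLie_swap x y z) (preLie_swap z x y) (preLie_swap z y x).
rewrite (s_right_comm x z y) (s_right_comm y z x) (s_right_comm z y x).
lincomb_ring (cubic_monomials x y z).
Qed.

End CircProduct.

Theorem proposition3p5 (F : fieldType) (A : vectType F)
  (charF0 : [pchar F] =i pred0)
  (star : A -> A -> A) (Hbil : bilinear_op star) (HpL : is_preLie star) :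
  let circ := fun x y : A => star x y + 2%:R *: star y x in
  (is_antipreLie circ <-> is_Novikov star) /\
  (is_Novikov star -> is_admissible_Novikov circ).
Proof.
have six_neq0 : (6%:R : F) != 0 by move/pcharf0P: charF0 => ->.
have circ_leftP := circ_left_identity_iff Hbil HpL six_neq0.
move=> circ; split; [split|].
- by case=> /circ_leftP.
- case=> _ star_rc; split; first exact/circ_leftP.
  exact: Novikov_circ_cyclic.
- case=> _ star_rc; split; first exact/circ_leftP.
  exact: Novikov_circ_admissible.
Qed.
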